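(* Let $n\ge1$. The map $\mathrm{GDes}\colon\mathfrak{S}_n\to\mathcal{Q}_n$ is order preserving, and for all $u\in\mathfrak{S}_n$ and $J\subseteq[n-1]$, $$\zeta_J\le u\iff J\subseteq\mathrm{GDes}(u).$$ That is, $(Z,\mathrm{GDes})$ with $Z(J)=\zeta_J$ is a Galois connection $\mathcal{Q}_n\rightleftarrows\mathfrak{S}_n$.
   Context: $\mathcal{Q}_n$ is the Boolean poset of subsets of $[n-1]$ ordered by inclusion. $\mathfrak{S}_n$ carries the weak order: $u\le v$ iff $\mathrm{Inv}(u)\subseteq\mathrm{Inv}(v)$, $\mathrm{Inv}(u)=\{(i,j):i<j,\ u_i>u_j\}$ (one-line notation). A permutation $u\in\mathfrak{S}_n$ has a global descent at $p\in[n-1]$ if $u_i>u_j$ for all $i\le p<j$ (equivalently $\{u_1,\ldots,u_p\}=\{n-p+1,\ldots,n\}$); $\mathrm{GDes}(u)$ is the set of global descents. For $J=\{p_1<\cdots<p_k\}\subseteq[n-1]$, $\zeta_J=(n{-}p_1{+}1,\ldots,n,\ n{-}p_2{+}1,\ldots,n{-}p_1,\ \ldots,\ 1,\ldots,n{-}p_k)$, and $\zeta_\emptyset=1_n$. *)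

From mathcomp Require Import all_boot all_fingroup.
Set Implicit Arguments. Unset Strict Implicit. Unset Printing Implicit Defensive.

(* Positions and values are shifted
   down by one (0-indexed): the one-line word of u is (u 0, ..., u (n-1)).
   A subset of [n-1] = {1,...,n-1} is a {set 'I_n} not containing 0. *)

Definition Inv n (u : 'S_n) : {set 'I_n * 'I_n} :=
  [set ij : 'I_n * 'I_n | (ij.1 < ij.2)%N && (u ij.2 < u ij.1)%N].

Definition weak_le n (u v : 'S_n) : bool := Inv u \subset Inv v.

Definition subset_nm1 n (J : {set 'I_n}) : bool := J \subset [set p : 'I_n | (0 < p)%N].

(* global descent at p in [n-1] (1-indexed): u_i > u_j for all i <= p < j;
   with 0-indexed positions i, j this reads  i < p <= j. *)
Definition GDes n (u : 'S_n) : {set 'I_n} :=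
  [set p : 'I_n | (0 < p)%N &&
     [forall i : 'I_n, forall j : 'I_n, ((i < p)%N && (p <= j)%N) ==> (u j < u i)%N]].

(* For 1-indexed position i' = i+1 lying in the block a < i' <= b, with
   a, b consecutive elements of {0} u J u {n}, the (1-indexed) value is
   n - b + (i' - a).  0-indexed: value n - b + i - a, where
   a = max ({0} u {p in J | p <= i}),  b = min ({n} u {p in J | i < p}). *)
Definition zeta_lo n (J : {set 'I_n}) (i : 'I_n) : nat :=
  \max_(p in J | (p <= i)%N) (p : nat).
Definition zeta_hi n (J : {set 'I_n}) (i : 'I_n) : nat :=
  n - \max_(p in J | (i < p)%N) (n - p).
Definition zeta_val n (J : {set 'I_n}) (i : 'I_n) : nat :=
  n - zeta_hi J i + i - zeta_lo J i.
Definition zeta_fun n (J : {set 'I_n}) (i : 'I_n) : 'I_n := insubd i (zeta_val J i).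

(* The word zeta_fun J is a permutation of 'I_n (a mathematical fact); the
   identity fallback is never used but keeps the definition total. *)
Definition zeta n (J : {set 'I_n}) : 'S_n :=
  if injectiveb (zeta_fun J) =P true is ReflectT H then perm (elimT (injectiveP _) H)
  else 1%g.

From mathcomp Require Import all_boot all_fingroup zify.
Set Implicit Arguments. Unset Strict Implicit. Unset Printing Implicit Defensive.

(* A position p is a global descent of u exactly when every pair straddling p
   is an inversion of u, and the inversions of zeta_J are exactly the pairs
   straddling some element of J: zeta_J is increasing inside each block cut
   out by J and reverses the order of the blocks.  Both claims are then
   statements about inclusions of inversion sets. *)

Definition straddles n (J : {set 'I_n}) (i j : 'I_n) : bool :=
  [exists p in J, (i < p <= j)%N].

Lemma GDesP n (u : 'S_n) (p : 'I_n) :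
  reflect (0 < p /\ forall i j : 'I_n, i < p <= j -> (i, j) \in Inv u)
          (p \in GDes u).
Proof.
rewrite inE; apply: (iffP andP) => [[p_gt0 /forallP desc] | [p_gt0 inv]].
  split=> // i j /andP[ip pj]; move/forallP/(_ j): (desc i).
  by rewrite ip pj inE (leq_trans ip pj) => /= ->.
split=> //; apply/forallP => i; apply/forallP => j; apply/implyP => ipj.
by move: (inv i j ipj); rewrite inE => /andP[].
Qed.

Section Zeta.
Variables (n : nat) (J : {set 'I_n}).

Lemma zeta_lo_le (i : 'I_n) : zeta_lo J i <= i.
Proof. by apply/bigmax_leqP => p /andP[]. Qed.

Lemma leq_zeta_lo (i p : 'I_n) : p \in J -> p <= i -> p <= zeta_lo J i.
Proof.
by move=> pJ pi; apply: (leq_bigmax_cond (F := fun p : 'I_n => p : nat)); rewrite pJ.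
Qed.

Lemma zeta_hi_gt (i : 'I_n) : i < zeta_hi J i.
Proof.
have : \max_(p in J | i < p) (n - p) <= (n - i).-1.
  by apply/bigmax_leqP => p /andP[_ ip]; have := ltn_ord p; lia.
by rewrite /zeta_hi; have := ltn_ord i; lia.
Qed.

Lemma zeta_hi_le (i : 'I_n) : zeta_hi J i <= n.
Proof. by rewrite /zeta_hi leq_subr. Qed.

Lemma zeta_hi_leq (i p : 'I_n) : p \in J -> i < p -> zeta_hi J i <= p.
Proof.
move=> pJ ip; have : n - p <= \max_(p in J | i < p) (n - p).
  by apply: (leq_bigmax_cond (F := fun p : 'I_n => n - p)); rewrite pJ.
by rewrite /zeta_hi; have := ltn_ord p; lia.
Qed.

Lemma zeta_bounds_same_block (i j : 'I_n) : i <= j -> ~~ straddles J i j ->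
  zeta_lo J i = zeta_lo J j /\ zeta_hi J i = zeta_hi J j.
Proof.
move=> ij /existsPn noJ.
have same_side (p : 'I_n) : p \in J -> (p <= i) = (p <= j) /\ (i < p) = (j < p).
  by move=> pJ; move: (noJ p); rewrite pJ /=; lia.
split; first by apply: eq_bigl => p; case pJ: (p \in J) => //; case: (same_side p pJ).
by rewrite /zeta_hi; congr (_ - _); apply: eq_bigl => p;
  case pJ: (p \in J) => //; case: (same_side p pJ).
Qed.

Lemma zeta_val_lt (i : 'I_n) : zeta_val J i < n.
Proof. by have := zeta_hi_le i; have := zeta_hi_gt i; rewrite /zeta_val; lia. Qed.

Lemma zeta_val_straddle (i j : 'I_n) :
  i < j -> straddles J i j -> zeta_val J j < zeta_val J i.
Proof.
move=> ij /existsP[p /andP[pJ /andP[ip pj]]].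
have := zeta_hi_leq pJ ip; have := leq_zeta_lo pJ pj.
have := zeta_hi_gt i; have := zeta_hi_le i; have := zeta_lo_le i.
have := zeta_hi_gt j; have := zeta_hi_le j; have := zeta_lo_le j.
rewrite /zeta_val; lia.
Qed.

Lemma zeta_val_same_block (i j : 'I_n) :
  i < j -> ~~ straddles J i j -> zeta_val J i < zeta_val J j.
Proof.
move=> ij noJ; rewrite /zeta_val.
have [<- ->] := zeta_bounds_same_block (ltnW ij) noJ.
by have := zeta_lo_le i; have := zeta_hi_gt j; have := zeta_hi_le j; lia.
Qed.

Lemma zeta_val_neq (i j : 'I_n) : i < j -> zeta_val J i != zeta_val J j.
Proof.
move=> ij; case: (boolP (straddles J i j)) =>
  [/(zeta_val_straddle ij) | /(zeta_val_same_block ij)].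
  by rewrite eq_sym => /ltn_eqF ->.
by move/ltn_eqF ->.
Qed.

Lemma zeta_funE (i : 'I_n) : zeta_fun J i = zeta_val J i :> nat.
Proof. by rewrite /zeta_fun val_insubd zeta_val_lt. Qed.

Lemma zeta_fun_inj : injective (zeta_fun J).
Proof.
move=> i j /(congr1 val); rewrite /= !zeta_funE => eq_ij; apply/val_inj => /=.
case: (ltngtP i j) => // [ij | ji].
  by move/eqP: eq_ij; rewrite (negbTE (zeta_val_neq ij)).
by move: eq_ij => /esym /eqP; rewrite (negbTE (zeta_val_neq ji)).
Qed.

Lemma zetaE (i : 'I_n) : zeta J i = zeta_val J i :> nat.
Proof.
rewrite /zeta; case: (injectiveb (zeta_fun J) =P true) => [inj | []].
  by rewrite permE zeta_funE.
exact/injectiveP/zeta_fun_inj.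
Qed.

Lemma Inv_zeta (i j : 'I_n) :
  ((i, j) \in Inv (zeta J)) = (i < j) && straddles J i j.
Proof.
rewrite inE /= !zetaE; case: (ltnP i j) => //= ij.
case: (boolP (straddles J i j)) =>
  [/(zeta_val_straddle ij) // | /(zeta_val_same_block ij)].
by move/ltnW; rewrite leqNgt => /negbTE.
Qed.

End Zeta.

Lemma GDes_weak_mono n (u v : 'S_n) : weak_le u v -> GDes u \subset GDes v.
Proof.
move=> /subsetP uv; apply/subsetP => p /GDesP[p_gt0 inv].
by apply/GDesP; split=> // i j ipj; apply/uv/inv.
Qed.

Lemma zeta_weak_le n (u : 'S_n) (J : {set 'I_n}) :
  subset_nm1 J -> weak_le (zeta J) u <-> J \subset GDes u.
Proof.
move=> /subsetP J_pos; split => [/subsetP zu | /subsetP JG].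
  apply/subsetP => p pJ; move: (J_pos p pJ); rewrite inE => p_gt0.
  apply/GDesP; split=> // i j /andP[ip pj]; apply: zu.
  by rewrite Inv_zeta (leq_trans ip pj); apply/existsP; exists p; rewrite pJ ip pj.
apply/subsetP => -[i j]; rewrite Inv_zeta => /andP[_ /existsP[p /andP[pJ ipj]]].
by case/GDesP: (JG p pJ) => _; apply.
Qed.

Theorem mainTheorem4 (n : nat) (hn : (1 <= n)%N) :
  (forall u v : 'S_n, weak_le u v -> GDes u \subset GDes v) /\
  (forall (u : 'S_n) (J : {set 'I_n}), subset_nm1 J ->
     weak_le (zeta J) u <-> J \subset GDes u).
Proof. by split; [exact: GDes_weak_mono | exact: zeta_weak_le]. Qed.
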